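(* For any $0\le k\le n$ and $\lambda,\mu\vdash n$, $$m\big((\lambda,\mu),\alpha_{H_n^k}\big)=m\big((\lambda',\mu'),\alpha_{H_n^k}\big)\quad\text{and}\quad m\big((\lambda,\mu),\alpha_{H_n^k}\big)=m\big((\mu,\lambda),\alpha_{H_n^k}\big),$$ where $\lambda',\mu'$ are the conjugate partitions.
   Context: Permutations are composed as functions, and $\pi\in S_n$ is identified with the permutation matrix whose $(i,j)$ entry is $1$ iff $i=\pi(j)$. For $A\in GL_n(\mathbb{Z}_2)$ let $\eta(A)$ (resp. $\theta(A)$) be the partition obtained by sorting the row sums (resp. column sums) of $A$, computed as integers, in weakly decreasing order. For $0\le k\le n$, $H_n^k=\{A\in GL_n(\mathbb{Z}_2)\mid \eta(A)=(n,n-1,\dots,n-k+1,1^{n-k}),\ \theta(A)=((k+1)^{n-k},k,k-1,\dots,1)\}$. $\alpha_{H_n^k}$ is the complex permutation representation of $S_n\times S_n$ on the space with basis $H_n^k$ given by $(\pi,\sigma)\bullet A=\pi A\sigma^{-1}$. $m((\lambda,\mu),\varphi)$ denotes the multiplicity in $\varphi$ of the irreducible $S_n\times S_n$-representation $S^\lambda\otimes S^\mu$. *)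

From HB Require Import structures.
From mathcomp Require Import all_boot all_order all_algebra all_fingroup.
From mathcomp Require Import algC.
Set Implicit Arguments. Unset Strict Implicit. Unset Printing Implicit Defensive.
Import GRing.Theory Num.Theory.
Local Open Scope ring_scope.

Definition is_partn (n : nat) (la : seq nat) : bool :=
  [&& sorted geq la, all (fun x => 0 < x)%N la & sumn la == n].

Definition conj_part (la : seq nat) : seq nat :=
  [seq count (fun x => j < x)%N la | j <- iota 0 (head 0%N la)].

Definition rowsum n (A : 'M['F_2]_n) (i : 'I_n) : nat :=
  (\sum_(j < n) (A i j != 0%R : nat))%N.
Definition colsum n (A : 'M['F_2]_n) (j : 'I_n) : nat :=
  (\sum_(i < n) (A i j != 0%R : nat))%N.

Definition eta_p n (A : 'M['F_2]_n) : seq nat :=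
  sort geq [seq rowsum A i | i <- enum 'I_n].
Definition theta_p n (A : 'M['F_2]_n) : seq nat :=
  sort geq [seq colsum A j | j <- enum 'I_n].

Definition eta_target (n k : nat) : seq nat :=
  [seq (n - i)%N | i <- iota 0 k] ++ nseq (n - k) 1%N.
Definition theta_target (n k : nat) : seq nat :=
  nseq (n - k) k.+1 ++ [seq (k - i)%N | i <- iota 0 k].

Definition Hnk (n k : nat) : {set 'M['F_2]_n} :=
  [set A : 'M['F_2]_n | (A \in unitmx) && (eta_p A == eta_target n k)
                        && (theta_p A == theta_target n k)].

Definition pmat {R : nzRingType} n (p : {perm 'I_n}) : 'M[R]_n :=
  \matrix_(i, j) (i == p j)%:R.

Definition act_mx n (p s : {perm 'I_n}) (A : 'M['F_2]_n) : 'M['F_2]_n :=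
  pmat p *m A *m pmat (s^-1)%g.

(* character of the permutation representation alpha_X of S_n x S_n
   on the space with basis X : trace of the permutation matrix of (p,s),
   i.e. the number of basis elements fixed by (p,s). *)
Definition alpha_char n (X : {set 'M['F_2]_n}) (p s : {perm 'I_n}) : algC :=
  (#|[set A in X | act_mx p s A == A]|)%:R.

Definition cells (la : seq nat) : seq (nat * nat) :=
  flatten [seq [seq (i, j) | j <- iota 0 (nth 0%N la i)] | i <- iota 0 (size la)].

(* A tableau of shape la |- n is encoded by t : {perm 'I_n}: the entry t k is
   written in the k-th cell (row-reading order). *)
Definition row_of (la : seq nat) n (t : {perm 'I_n}) (e : 'I_n) : nat :=
  (nth (0, 0) (cells la) (t^-1%g e)).1.
Definition col_of (la : seq nat) n (t : {perm 'I_n}) (e : 'I_n) : nat :=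
  (nth (0, 0) (cells la) (t^-1%g e)).2.

(* tabloids: an entry -> its row *)
Definition tabloid_t n := {ffun 'I_n -> 'I_n.+1}.
Definition tabloid (la : seq nat) n (t : {perm 'I_n}) : tabloid_t n :=
  [ffun e => inord (row_of la t e)].

(* the tableau c.t obtained by applying c to the entries of t *)
Definition perm_tab n (c t : {perm 'I_n}) : {perm 'I_n} := (t * c)%g.

Definition colstab (la : seq nat) n (t : {perm 'I_n}) : {set {perm 'I_n}} :=
  [set c : {perm 'I_n} | [forall e, col_of la t (c e) == col_of la t e]].

Definition NM n := #|{: tabloid_t n}|.
Definition tdelta n (T : tabloid_t n) : 'rV[algC]_(NM n) :=
  \row_(j < NM n) (j == enum_rank T)%:R.

Definition polytabloid (la : seq nat) n (t : {perm 'I_n}) : 'rV[algC]_(NM n) :=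
  \sum_(c in colstab la t) (-1) ^+ (odd_perm c) *: tdelta (tabloid la (perm_tab c t)).

(* the Specht module S^la: row space spanned by all polytabloids *)
Definition specht_span (la : seq nat) n : 'M[algC]_(#|{: {perm 'I_n}}|, NM n) :=
  \matrix_(i < #|{: {perm 'I_n}}|) polytabloid la (enum_val i).

Definition tab_act n (p : {perm 'I_n}) (T : tabloid_t n) : tabloid_t n :=
  [ffun e => T ((p^-1)%g e)].
Definition Mperm n (p : {perm 'I_n}) : 'M[algC]_(NM n) :=
  \matrix_(i, j) (enum_val j == tab_act p (enum_val i))%:R.

(* character of S^la: trace of the action of p restricted to S^la,
   computed in the basis row_base of the Specht subspace *)
Definition specht_char (la : seq nat) n (p : {perm 'I_n}) : algC :=
  let B := row_base (specht_span la n) in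
  \tr (B *m Mperm p *m pinvmx B).

(* multiplicity of the irreducible S^la (x) S^mu in the permutation
   representation alpha_X of S_n x S_n: the character inner product *)
Definition mult n (la mu : seq nat) (X : {set 'M['F_2]_n}) : algC :=
  ((n`! ^ 2)%:R)^-1 *
  \sum_(p : {perm 'I_n}) \sum_(s : {perm 'I_n})
     alpha_char X p s * ((specht_char la p)^* * (specht_char mu s)^*).

(* If (p, s) fixes a matrix A of H_n^k, then s is conjugate to p.
   Indeed the rows of A of weight other than 1 have pairwise distinct weights,
   so p fixes them; since at most k rows have weight other than 1, every column
   not carrying the 1 of a weight-one row has weight at most k, and every column
   weight other than k+1 occurs only once, so s fixes these columns; and, A being
   invertible, the 1s of the weight-one rows lie in distinct columns.  Sending each
   weight-one row to the column of its 1 and the other rows bijectively onto the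
   other columns gives g with g p = s g.  Hence the character alpha(p, s) of
   alpha_{H_n^k} (its number of fixed points) is symmetric in p and s, and it
   vanishes unless sgn p = sgn s.
   On the other side chi^{la'} = sgn * chi^la.  For the row and column tabloids
   R, C of one tableau, the matrix K with K_{a,b} = sum_sigma sgn sigma
   [a = sigma R] [b = sigma C] has the polytabloids of shape la, up to sign, as
   columns, and those of shape la' as rows, because transposing the tableau
   exchanges R and C.  Moreover K M_p = sgn p * M_p K, and K is real, so right
   multiplication by K is injective on the row space of K^T: it carries S^la onto
   S^la' and twists the action by sgn.
   Both identities then follow termwise from the inner-product formula for the
   multiplicities. *)

From mathcomp Require Import all_boot all_order all_algebra all_fingroup.
From mathcomp Require Import algC.
Set Implicit Arguments. Unset Strict Implicit. Unset Printing Implicit Defensive.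
Import GRing.Theory Num.Theory.

Lemma mem_cells la x : (x \in cells la) = (x.1 < size la) && (x.2 < nth 0 la x.1).
Proof.
case: x => i j /=; apply/flatten_mapP/andP => [[i' i'r /mapP [j' j'r [-> ->]]]|[ilt jlt]].
  by move: i'r j'r; rewrite !mem_iota !add0n.
by exists i; rewrite ?mem_iota //; apply/mapP; exists j; rewrite ?mem_iota.
Qed.

Lemma uniq_cells la : uniq (cells la).
Proof.
rewrite /cells; elim: (iota 0 _) (iota_uniq 0 (size la)) => [|i r IHr] //=.
case/andP => ir ur; rewrite cat_uniq IHr // andbT map_inj_uniq ?iota_uniq //=.
  apply/hasPn => _ /flatten_mapP [i' i'r /mapP [j _ ->]].
  by apply/mapP => -[j' _ [ii' _]]; move: ir; rewrite -ii' i'r.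
by move=> j j' [].
Qed.

Lemma size_cells la : size (cells la) = sumn la.
Proof.
rewrite /cells size_flatten /shape -map_comp.
rewrite (eq_map (g := nth 0 la)) => [|i /=]; last by rewrite size_map size_iota.
by rewrite -/(mkseq _ _) mkseq_nth.
Qed.

Lemma sorted_geq_nth_head (la : seq nat) i : sorted geq la -> nth 0 la i <= head 0 la.
Proof.
case: la => [|x s] /=; first by rewrite nth_nil.
move=> /(order_path_min (fun a b c ba cb => leq_trans cb ba)) /allP allx.
case: i => [|i] //=; case: (ltnP i (size s)) => [ilt|ige].
  exact/allx/mem_nth.
by rewrite nth_default.
Qed.

Lemma count_gt_sorted (la : seq nat) i j : sorted geq la ->
  (i < count (fun x => j < x) la) = (j < nth 0 la i).
Proof.
elim: la i => [|x s IHs] i; first by rewrite /= nth_nil.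
move=> xs; have ss := path_sorted xs; rewrite /=.
case: (ltnP j x) => [jx|xj]; first by case: i => [|i] //=; rewrite add1n ltnS IHs.
have -> : count (fun y => j < y) s = 0.
  apply/eqP; rewrite -leqn0 leqNgt -has_count; apply/hasPn => y ys.
  rewrite -leqNgt (leq_trans _ xj) //.
  by move: (sorted_geq_nth_head (index y s).+1 xs); rewrite /= nth_index.
rewrite add0n /=; apply/esym/negbTE; rewrite -leqNgt.
exact: leq_trans (sorted_geq_nth_head i xs) xj.
Qed.

Lemma mem_cells_conj_part la i j : sorted geq la ->
  ((j, i) \in cells (conj_part la)) = ((i, j) \in cells la).
Proof.
move=> sla; rewrite !mem_cells /= /conj_part size_map size_iota.
case: (ltnP j (head 0 la)) => [jlt|jge] /=.
  rewrite (nth_map 0) ?size_iota // nth_iota // add0n count_gt_sorted //.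
  case: (ltnP j (nth 0 la i)) => [jlt'|]; rewrite ?andbF ?andbT //.
  by case: (ltnP i (size la)) => // ige; rewrite nth_default in jlt'.
case: (ltnP j (nth 0 la i)) => [jlt|]; rewrite ?andbF //.
by move: (leq_trans jlt (sorted_geq_nth_head i sla)); rewrite ltnNge jge.
Qed.

Definition swap_cell (x : nat * nat) := (x.2, x.1).

Lemma swap_cellK : involutive swap_cell. Proof. by case. Qed.

Lemma perm_cells_conj_part la : sorted geq la ->
  perm_eq (cells (conj_part la)) (map swap_cell (cells la)).
Proof.
move=> sla; apply: uniq_perm; rewrite ?uniq_cells //.
  by rewrite (map_inj_uniq (inv_inj swap_cellK)) uniq_cells.
case=> j i; rewrite -[(j, i)]swap_cellK (mem_map (inv_inj swap_cellK)) /=.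
exact: mem_cells_conj_part.
Qed.

Lemma size_cells_conj_part la : sorted geq la ->
  size (cells (conj_part la)) = sumn la.
Proof. by move/perm_cells_conj_part/perm_size; rewrite size_map size_cells. Qed.

Lemma col_of_leq la n (t : {perm 'I_n}) e : (forall x, x \in la -> x <= n) ->
  col_of la t e <= n.
Proof.
move=> la_le; rewrite /col_of; set k := (t^-1)%g e.
case: (ltnP k (size (cells la))) => [klt|]; last by move=> kge; rewrite nth_default.
move: (mem_nth (0, 0) klt); rewrite mem_cells => /andP [ilt jlt].
exact/ltnW/(leq_trans jlt)/la_le/mem_nth.
Qed.

Lemma partn_leq n la : is_partn n la -> forall x, x \in la -> x <= n.
Proof.
case/and3P => _ _ /eqP <- x; elim: la => [|y l IHl] //=.
rewrite inE => /predU1P [->|/IHl xl]; first exact: leq_addr.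
exact: leq_trans xl (leq_addl _ _).
Qed.

Lemma size_partn n la : is_partn n la -> size la <= n.
Proof.
case/and3P => _ + /eqP <-; elim: la => [|y l IHl] //= /andP [y_gt0 l_gt0].
by rewrite -add1n leq_add // IHl.
Qed.

Lemma conj_partn_leq n la : is_partn n la -> forall x, x \in conj_part la -> x <= n.
Proof.
by move=> la_n x /mapP [j _ ->]; exact: leq_trans (count_size _ _) (size_partn la_n).
Qed.

Section TransposedTableau.
Variables (n : nat) (la : seq nat).
Hypothesis la_n : is_partn n la.

Lemma exists_transposed_tableau : exists t : {perm 'I_n},
  (forall e, row_of (conj_part la) t e = col_of la 1 e) /\
  (forall e, col_of (conj_part la) t e = row_of la 1 e).
Proof.
case/and3P: la_n => sla _ /eqP sum_la.
set c := cells la; set c' := cells (conj_part la).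
have size_c : size c = n by rewrite size_cells.
have size_c' : size c' = n by rewrite size_cells_conj_part.
have swap_in (e : 'I_n) : swap_cell (nth (0, 0) c e) \in c'.
  rewrite (perm_mem (perm_cells_conj_part sla)) mem_map ?mem_nth ?size_c //.
  exact: inv_inj swap_cellK.
pose f (e : 'I_n) : 'I_n := insubd e (index (swap_cell (nth (0, 0) c e)) c').
have fE e : nth (0, 0) c' (f e) = swap_cell (nth (0, 0) c e).
  have := swap_in e; rewrite -index_mem size_c' => idx_lt.
  by rewrite insubdK ?nth_index.
have f_inj : injective f.
  move=> e1 e2 /(congr1 (fun i : 'I_n => nth (0, 0) c' i)).
  rewrite !fE => /(inv_inj swap_cellK) /eqP.
  by rewrite nth_uniq ?size_c ?uniq_cells // => /eqP /val_inj.
exists (perm f_inj)^-1%g.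
by split=> e; rewrite /row_of /col_of invgK invg1 perm1 permE fE.
Qed.

End TransposedTableau.

Section RestrictedTrace.
Variable F : fieldType.
Local Open Scope ring_scope.

Lemma pinvmx_restrictE m N (B : 'M[F]_(m, N)) (M : 'M_N) (X : 'M_m) :
  row_free B -> X *m B = B *m M -> B *m M *m pinvmx B = X.
Proof.
move=> freeB XB; apply: (row_free_inj freeB); rewrite /= mulmxKpV //.
by rewrite -XB submxMl.
Qed.

Lemma mxtrace_restrict_eqmx m1 m2 N (B1 : 'M[F]_(m1, N)) (B2 : 'M[F]_(m2, N))
    (M : 'M_N) :
  row_free B1 -> row_free B2 -> (B1 :=: B2)%MS -> stablemx B1 M ->
  \tr (B2 *m M *m pinvmx B2) = \tr (B1 *m M *m pinvmx B1).
Proof.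
move=> freeB1 freeB2 eqB12 stabB1.
set Q := B2 *m pinvmx B1; set Q' := B1 *m pinvmx B2.
have QB1 : Q *m B1 = B2 by rewrite mulmxKpV // eqB12.
have Q'B2 : Q' *m B2 = B1 by rewrite mulmxKpV // -eqB12.
have Q'Q : Q' *m Q = 1%:M.
  by apply: (row_free_inj freeB1); rewrite /= -mulmxA QB1 Q'B2 mul1mx.
set X1 := B1 *m M *m pinvmx B1.
have X1B1 : X1 *m B1 = B1 *m M by rewrite mulmxKpV.
clearbody Q Q' X1; rewrite (@pinvmx_restrictE _ _ _ _ (Q *m X1 *m Q')) //.
  by rewrite mxtrace_mulC mulmxA Q'Q mul1mx.
by rewrite -!mulmxA Q'B2 X1B1 !mulmxA QB1.
Qed.

Lemma mxtrace_restrict_twist m N (B : 'M[F]_(m, N)) (M K : 'M_N) (c : F) :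
  row_free B -> row_free (B *m K) -> stablemx B M ->
  K *m M = c *: (M *m K) ->
  \tr (B *m K *m M *m pinvmx (B *m K)) = c * \tr (B *m M *m pinvmx B).
Proof.
move=> freeB freeBK stabB KM.
set X := B *m M *m pinvmx B.
have XB : X *m B = B *m M by rewrite mulmxKpV.
clearbody X; rewrite (@pinvmx_restrictE _ _ _ _ (c *: X)) ?mxtraceZ //.
by rewrite -scalemxAl mulmxA XB -mulmxA scalemxAr -KM mulmxA.
Qed.

End RestrictedTrace.

Section RealMatrices.
Variable C : numClosedFieldType.
Local Open Scope ring_scope.

Lemma real_mx_ker0 m N (K : 'M[C]_N) (W : 'M[C]_(m, N)) :
  (forall i j, (K i j)^* = K i j) -> (W <= K^T)%MS -> W *m K = 0 -> W = 0.
Proof.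
move=> realK sWK WK0.
pose Y := W *m pinvmx K^T.
have WY : W = Y *m K^T by rewrite mulmxKpV.
have conjW : map_mx Num.conj W = map_mx Num.conj Y *m K^T.
  apply/matrixP=> i j; rewrite WY !mxE rmorph_sum; apply: eq_bigr => l _.
  by rewrite !mxE rmorphM /= realK.
have WW0 : W *m (map_mx Num.conj W)^T = 0.
  by rewrite conjW trmx_mul trmxK mulmxA WK0 mul0mx.
apply/matrixP => i j; rewrite mxE.
have /eqP := congr1 (fun X : 'M[C]_m => X i i) WW0; rewrite !mxE.
(* the diagonal of W W^* is a sum of squared moduli *)
rewrite psumr_eq0 => [/allP /(_ j (mem_index_enum _))|l _]; rewrite !mxE.
  by rewrite mul_conjC_eq0 => /eqP.
exact: mul_conjC_ge0.
Qed.

Lemma row_free_mul_real m N (K : 'M[C]_N) (B : 'M[C]_(m, N)) :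
  (forall i j, (K i j)^* = K i j) -> (B <= K^T)%MS -> row_free B ->
  row_free (B *m K).
Proof.
move=> realK sBK freeB; rewrite -kermx_eq0; apply/eqP.
apply: (row_free_inj freeB); rewrite /= mul0mx.
apply: (real_mx_ker0 realK); first exact: submx_trans (submxMl _ _) sBK.
by rewrite -mulmxA mulmx_ker.
Qed.

End RealMatrices.

Section SpechtIncidence.
Variable n : nat.
Local Notation perm := {perm 'I_n}.
Local Notation tab := (tabloid_t n).
Local Open Scope ring_scope.

Definition sgn (s : perm) : algC := (-1) ^+ odd_perm s.

Lemma sgnM s t : sgn (s * t)%g = sgn s * sgn t.
Proof. by rewrite /sgn odd_permM signr_addb. Qed.

Lemma sgn_sqr s : sgn s * sgn s = 1.
Proof. by rewrite -expr2 sqrr_sign. Qed.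

Lemma sgn_conj s : (sgn s)^* = sgn s.
Proof. exact: rmorph_sign. Qed.

Lemma tab_actM (p q : perm) (T : tab) :
  tab_act (p * q)%g T = tab_act q (tab_act p T).
Proof. by apply/ffunP => e; rewrite !ffunE invMg permM. Qed.

Lemma tab_act1 (T : tab) : tab_act 1%g T = T.
Proof. by apply/ffunP => e; rewrite !ffunE invg1 perm1. Qed.

Lemma tab_actK (p : perm) : cancel (tab_act p) (tab_act p^-1).
Proof. by move=> T; rewrite -tab_actM mulgV tab_act1. Qed.

Lemma tab_actKV (p : perm) : cancel (tab_act p^-1) (tab_act p).
Proof. by move=> T; rewrite -tab_actM mulVg tab_act1. Qed.

Lemma eq_enum_rank (T : tab) (j : 'I_(NM n)) :
  (j == enum_rank T) = (enum_val j == T).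
Proof. by apply/eqP/eqP => [->|<-]; rewrite ?enum_rankK ?enum_valK. Qed.

Definition signed_incidence (R C a b : tab) : algC :=
  \sum_(s : perm) sgn s * ((a == tab_act s R) && (b == tab_act s C))%:R.

Definition incidence_mx (R C : tab) : 'M[algC]_(NM n) :=
  \matrix_(i, j) signed_incidence R C (enum_val i) (enum_val j).

Lemma tr_incidence_mx R C : (incidence_mx R C)^T = incidence_mx C R.
Proof.
apply/matrixP => i j; rewrite !mxE; apply: eq_bigr => s _.
by rewrite andbC.
Qed.

Lemma incidence_mx_real R C i j : (incidence_mx R C i j)^* = incidence_mx R C i j.
Proof.
rewrite mxE rmorph_sum; apply: eq_bigr => s _.
by rewrite rmorphM /= conjC_nat sgn_conj.
Qed.

Lemma signed_incidence_act R C p a b :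
  signed_incidence R C (tab_act p a) b =
  sgn p * signed_incidence R C a (tab_act p^-1 b).
Proof.
rewrite /signed_incidence mulr_sumr (reindex_inj (mulIg p)) /=.
apply: eq_bigr => s _; rewrite sgnM [sgn s * _]mulrC -mulrA; congr (_ * (_ * _%:R)).
by rewrite !tab_actM (inj_eq (can_inj (tab_actK p))) (can2_eq (tab_actKV p) (tab_actK p)).
Qed.

Lemma incidence_mx_perm R C (p : perm) :
  incidence_mx R C *m Mperm p = sgn p *: (Mperm p *m incidence_mx R C).
Proof.
apply/matrixP => i j; rewrite !mxE.
rewrite (bigD1 (enum_rank (tab_act p^-1 (enum_val j)))) //=.
rewrite [X in _ = _ * X](bigD1 (enum_rank (tab_act p (enum_val i)))) //=.
rewrite !big1 ?addr0.
- rewrite !mxE !enum_rankK eqxx tab_actKV eqxx !mulr1 mul1r.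
  by rewrite signed_incidence_act mulrA sgn_sqr mul1r.
- by move=> T /negPf nT; rewrite !mxE -eq_enum_rank nT mul0r.
- move=> T /negPf nT; rewrite !mxE -(can2_eq (tab_actKV p) (tab_actK p)).
  by rewrite eq_sym -eq_enum_rank nT mulr0.
Qed.

Definition col_tabloid (la : seq nat) (w : perm) : tab :=
  [ffun e => inord (col_of la w e)].

Definition gen_polytabloid (R C : tab) : 'rV[algC]_(NM n) :=
  \sum_(c : perm | tab_act c C == C) sgn c *: tdelta (tab_act c R).

Lemma tabloidM la (w c : perm) : tabloid la (w * c)%g = tab_act c (tabloid la w).
Proof. by apply/ffunP => e; rewrite !ffunE /row_of invMg permM. Qed.

Lemma col_tabloidM la (w c : perm) :
  col_tabloid la (w * c)%g = tab_act c (col_tabloid la w).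
Proof. by apply/ffunP => e; rewrite !ffunE /col_of invMg permM. Qed.

(* [inord] is injective on column indices only thanks to the bound [la_le]. *)
Lemma polytabloidE la (w : perm) : (forall x, x \in la -> (x <= n)%N) ->
  polytabloid la w = gen_polytabloid (tabloid la w) (col_tabloid la w).
Proof.
move=> la_le; apply: eq_big => [c|c _]; last by rewrite /perm_tab tabloidM.
rewrite inE; apply/forallP/eqP => [colc|/ffunP colc e].
  apply/ffunP => e; rewrite !ffunE; congr inord.
  by have /eqP := colc (c^-1 e)%g; rewrite permKV.
have := colc (c e); rewrite !ffunE permK => /(congr1 val) /=.
by rewrite !inordK ?ltnS ?col_of_leq // => ->.
Qed.

Lemma row_tr_incidence_mx R C (j : 'I_(NM n)) :
  row j (incidence_mx R C)^T =
  \sum_(s : perm) (sgn s * (enum_val j == tab_act s C)%:R) *: tdelta (tab_act s R).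
Proof.
apply/rowP => a; rewrite !mxE summxE; apply: eq_bigr => s _.
by rewrite !mxE eq_enum_rank -mulrA -natrM mulnb andbC.
Qed.

Lemma row_tr_incidence_orbit R C (s : perm) :
  row (enum_rank (tab_act s C)) (incidence_mx R C)^T =
  sgn s *: gen_polytabloid (tab_act s R) (tab_act s C).
Proof.
rewrite row_tr_incidence_mx (reindex_inj (mulgI s)) /= scaler_sumr [RHS]big_mkcond.
apply: eq_bigr => c _; rewrite enum_rankK !tab_actM sgnM eq_sym.
by case: eqP => _; rewrite ?mulr1 ?scalerA // mulr0 scale0r.
Qed.

Lemma row_tr_incidence_out R C (j : 'I_(NM n)) :
  (forall s : perm, enum_val j != tab_act s C) -> row j (incidence_mx R C)^T = 0.
Proof.
move=> j_out; rewrite row_tr_incidence_mx big1 // => s _.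
by rewrite (negPf (j_out s)) mulr0 scale0r.
Qed.

Lemma polytabloid_row_incidence la (t s : perm) : (forall x, x \in la -> (x <= n)%N) ->
  polytabloid la (t * s)%g = sgn s *:
    row (enum_rank (tab_act s (col_tabloid la t)))
        (incidence_mx (tabloid la t) (col_tabloid la t))^T.
Proof.
move=> la_le; rewrite row_tr_incidence_orbit scalerA sgn_sqr scale1r.
by rewrite polytabloidE // tabloidM col_tabloidM.
Qed.

Lemma specht_span_incidence la (t : perm) : (forall x, x \in la -> (x <= n)%N) ->
  (specht_span la n :=: (incidence_mx (tabloid la t) (col_tabloid la t))^T)%MS.
Proof.
move=> la_le; apply/eqmxP/andP; split; apply/row_subP.
  move=> i; rewrite rowK.
  have -> : enum_val i = (t * (t^-1 * enum_val i))%g by rewrite mulKVg.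
  by rewrite polytabloid_row_incidence // scalemx_sub ?row_sub.
move=> j; case: (pickP (fun s : perm => enum_val j == tab_act s (col_tabloid la t))).
  move=> s /eqP js; rewrite -(enum_valK j) js -[row _ _]scale1r -(sgn_sqr s).
  rewrite -scalerA -polytabloid_row_incidence // scalemx_sub //.
  have -> : polytabloid la (t * s)%g = row (enum_rank (t * s)%g) (specht_span la n).
    by rewrite rowK enum_rankK.
  exact: row_sub.
by move=> j_out; rewrite row_tr_incidence_out ?sub0mx // => s; rewrite j_out.
Qed.

Lemma incidence_mx_stable (R C : tab) (p : perm) :
  stablemx (incidence_mx R C) (Mperm p).
Proof. by rewrite incidence_mx_perm scalemx_sub ?submxMl. Qed.

Lemma specht_char_conj_part la (p : perm) : is_partn n la ->
  specht_char (conj_part la) p = sgn p * specht_char la p.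
Proof.
move=> la_n; pose K := incidence_mx (tabloid la 1) (col_tabloid la 1).
have spanK : (specht_span la n :=: K^T)%MS.
  exact: specht_span_incidence (partn_leq la_n).
have spanK' : (specht_span (conj_part la) n :=: K)%MS.
  have [t [rowE colE]] := exists_transposed_tableau la_n.
  have -> : K = (incidence_mx (tabloid (conj_part la) t) (col_tabloid (conj_part la) t))^T.
    rewrite tr_incidence_mx.
    by congr incidence_mx; apply/ffunP => e; rewrite !ffunE ?rowE ?colE.
  exact: specht_span_incidence (conj_partn_leq la_n).
set B := row_base (specht_span la n).
have freeB : row_free B := row_base_free _.
have BK : (B <= K^T)%MS by rewrite eq_row_base spanK.
have freeBK : row_free (B *m K).
  exact: row_free_mul_real (incidence_mx_real _ _) BK freeB.
have BK_K : (B *m K :=: K)%MS.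
  apply/eqmxP; rewrite -(mxrank_leqif_sup (submxMl B K)).2 (eqP freeBK).
  by rewrite submxMl; apply/eqP; rewrite spanK mxrank_tr.
rewrite /specht_char -/B (mxtrace_restrict_eqmx freeBK (row_base_free _)).
- rewrite (mxtrace_restrict_twist (c := sgn p)) ?incidence_mx_perm //.
  rewrite (eqmx_stable _ (eq_row_base _)) (eqmx_stable _ spanK) tr_incidence_mx.
  exact: incidence_mx_stable.
- exact: eqmx_trans BK_K (eqmx_trans (eqmx_sym spanK') (eqmx_sym (eq_row_base _))).
- by rewrite (eqmx_stable _ BK_K) incidence_mx_stable.
Qed.

End SpechtIncidence.

Lemma perm_sort_geq (s1 s2 : seq nat) : perm_eq s1 s2 -> sort geq s1 = sort geq s2.
Proof.
move=> s12; apply/perm_sortP => //.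
- by move=> x y; exact: leq_total.
- by move=> x y z yx zy; exact: leq_trans zy yx.
- by move=> x y /andP [xy yx]; apply/anti_leq/andP.
Qed.

Lemma perm_map_enum_perm n (f : 'I_n -> nat) (a : {perm 'I_n}) :
  perm_eq [seq f (a i) | i <- enum 'I_n] [seq f i | i <- enum 'I_n].
Proof.
rewrite map_comp; apply/perm_map/uniq_perm => [||i].
- by rewrite map_inj_uniq ?enum_uniq //; exact: perm_inj.
- exact: enum_uniq.
- by rewrite mem_enum; apply/mapP; exists (a^-1 i)%g; rewrite ?mem_enum ?permKV.
Qed.

Section MatrixAction.
Variable n : nat.
Local Notation perm := {perm 'I_n}.
Local Open Scope ring_scope.

Lemma act_mxE (p s : perm) A i j : act_mx p s A i j = A (p^-1 i)%g (s^-1 j)%g.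
Proof.
rewrite /act_mx !mxE (bigD1 (s^-1 j)%g) //= big1 ?addr0 => [|k kj].
  rewrite [pmat _ _ _]mxE eqxx mulr1 !mxE (bigD1 (p^-1 i)%g) //= big1 ?addr0 => [|l li].
    by rewrite [pmat _ _ _]mxE permKV eqxx mul1r.
  by rewrite [pmat _ _ _]mxE eq_sym (can2_eq (permK p) (permKV p)) (negPf li) mul0r.
by rewrite [pmat _ _ _]mxE (negPf kj) mulr0.
Qed.

Lemma act_mxM (p s q r : perm) A :
  act_mx p s (act_mx q r A) = act_mx (q * p)%g (r * s)%g A.
Proof. by apply/matrixP => i j; rewrite !act_mxE !invMg !permM. Qed.

Lemma act_mx1 (A : 'M['F_2]_n) : act_mx 1%g 1%g A = A.
Proof. by apply/matrixP => i j; rewrite !act_mxE invg1 !perm1. Qed.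

Lemma act_mx_inj (p s : perm) : injective (act_mx p s).
Proof.
move=> A B /(congr1 (act_mx p^-1 s^-1)).
by rewrite !act_mxM !mulgV !act_mx1.
Qed.

Lemma act_mx_fixP (p s : perm) A :
  act_mx p s A = A <-> forall i j, A (p i) (s j) = A i j.
Proof.
split => [fixA i j|fixA]; first by rewrite -{1}fixA act_mxE !permK.
by apply/matrixP => i j; rewrite act_mxE -fixA !permKV.
Qed.

Lemma rowsum_act (p s : perm) A i : rowsum (act_mx p s A) i = rowsum A (p^-1 i)%g.
Proof.
rewrite /rowsum (reindex_inj (@perm_inj _ s)) /=; apply: eq_bigr => j _.
by rewrite act_mxE permK.
Qed.

Lemma colsum_act (p s : perm) A j : colsum (act_mx p s A) j = colsum A (s^-1 j)%g.
Proof.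
rewrite /colsum (reindex_inj (@perm_inj _ p)) /=; apply: eq_bigr => i _.
by rewrite act_mxE permK.
Qed.

Lemma eta_p_act (p s : perm) A : eta_p (act_mx p s A) = eta_p A.
Proof. by apply: perm_sort_geq; rewrite (eq_map (rowsum_act p s A)) perm_map_enum_perm. Qed.

Lemma theta_p_act (p s : perm) A : theta_p (act_mx p s A) = theta_p A.
Proof. by apply: perm_sort_geq; rewrite (eq_map (colsum_act p s A)) perm_map_enum_perm. Qed.

Lemma pmat_perm_mx (p : perm) : (pmat p : 'M['F_2]_n) = perm_mx (p^-1)%g.
Proof.
by apply/matrixP => i j; rewrite !mxE eq_sym (can2_eq (permK p) (permKV p)) eq_sym.
Qed.

Lemma Hnk_act k (p s : perm) A : A \in Hnk n k -> act_mx p s A \in Hnk n k.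
Proof.
rewrite !inE eta_p_act theta_p_act => /andP [/andP [unitA ->] ->]; rewrite !andbT.
by rewrite !unitmx_mul !pmat_perm_mx !unitmx_perm unitA.
Qed.

End MatrixAction.

Lemma F2E (x : 'F_2) : x = (x != 0%R)%:R%R.
Proof. by case: x => [[|[|m]]] //= lt_m; apply: val_inj. Qed.

Lemma sum_nat_bool_card (T : finType) (P : pred T) : \sum_(j : T) P j = #|P|.
Proof.
by rewrite -sum1_card [RHS]big_mkcond; apply: eq_bigr => j _; rewrite unfold_in; case: (P j).
Qed.

Lemma card_count (T : finType) (P : pred T) : #|P| = count P (enum T).
Proof. by rewrite [in RHS]enumT cardE /enum_mem size_filter. Qed.

Lemma perm_fix_unique_fibre (T : finType) (aT : eqType) (f : T -> aT) (q : {perm T}) i :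
  (forall x, f (q x) = f x) -> #|[pred x | f x == f i]| <= 1 -> q i = i.
Proof. by move=> fq /card_le1_eqP; apply; rewrite !inE ?fq. Qed.

Lemma exists_inj_card_eq (T : finType) (X Y : {set T}) : #|X| = #|Y| ->
  exists2 h : T -> T, {in X, forall x, h x \in Y} & {in X &, injective h}.
Proof.
move=> cardXY; have idx_lt x : x \in X -> index x (enum X) < size (enum Y).
  by move=> xX; rewrite -cardE -cardXY cardE index_mem mem_enum.
exists (fun x => nth x (enum Y) (index x (enum X))).
  by move=> x xX; rewrite -mem_enum mem_nth ?idx_lt.
move=> x y xX yX /= /eqP; rewrite (set_nth_default x y (idx_lt y yX)).
rewrite nth_uniq ?idx_lt ?enum_uniq // => /eqP /(congr1 (nth x (enum X))).
by rewrite !nth_index ?mem_enum.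
Qed.

Lemma count_eta_target n k v : k <= n -> v != 1 -> count (pred1 v) (eta_target n k) <= 1.
Proof.
move=> le_kn v1; rewrite count_cat count_nseq /= eq_sym (negPf v1) mul0n addn0.
rewrite count_uniq_mem; first by case: (_ \in _).
rewrite map_inj_in_uniq ?iota_uniq // => a b; rewrite !mem_iota !add0n => ak bk.
by move/(congr1 (subn n)); rewrite !subKn // ltnW // (leq_trans _ le_kn).
Qed.

Lemma count_eta_target1 n k : n - k <= count (pred1 1) (eta_target n k).
Proof. by rewrite count_cat count_nseq /= mul1n leq_addl. Qed.

Lemma count_theta_target n k v : v != k.+1 -> count (pred1 v) (theta_target n k) <= 1.
Proof.
move=> vk; rewrite count_cat count_nseq /= eq_sym (negPf vk) mul0n add0n.
rewrite count_uniq_mem; first by case: (_ \in _).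
rewrite map_inj_in_uniq ?iota_uniq // => a b; rewrite !mem_iota !add0n => ak bk.
by move/(congr1 (subn k)); rewrite !subKn // ltnW.
Qed.

Section FixedMatrix.
Variables (n k : nat) (A : 'M['F_2]_n) (p s : {perm 'I_n}).
Hypotheses (le_kn : k <= n) (A_H : A \in Hnk n k).
Hypothesis A_fix : forall i j, A (p i) (s j) = A i j.

Lemma rowsum_fix i : rowsum A (p i) = rowsum A i.
Proof.
by rewrite /rowsum (reindex_inj (@perm_inj _ s)); apply: eq_bigr => j _; rewrite A_fix.
Qed.

Lemma colsum_fix j : colsum A (s j) = colsum A j.
Proof.
by rewrite /colsum (reindex_inj (@perm_inj _ p)); apply: eq_bigr => i _; rewrite A_fix.
Qed.

Lemma card_rowsum_fibre v :
  #|[pred i | rowsum A i == v]| = count (pred1 v) (eta_target n k).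
Proof.
move: A_H; rewrite inE => /andP [/andP [_ /eqP <-] _].
by rewrite card_count /eta_p (seq.permP (permEl (perm_sort geq _))) [in RHS]count_map.
Qed.

Lemma card_colsum_fibre v :
  #|[pred j | colsum A j == v]| = count (pred1 v) (theta_target n k).
Proof.
move: A_H; rewrite inE => /andP [_ /eqP <-].
by rewrite card_count /theta_p (seq.permP (permEl (perm_sort geq _))) [in RHS]count_map.
Qed.

Definition weight1_rows := [set i | rowsum A i == 1].

Definition one_col (i : 'I_n) : 'I_n := odflt i [pick j | A i j != 0%R].

Lemma weight1_row_supp i : i \in weight1_rows ->
  forall j, (A i j != 0%R) = (j == one_col i).
Proof.
rewrite inE /rowsum sum_nat_bool_card => /card1P [x suppA] j.
have suppE j' : (A i j' != 0%R) = (j' == x) by have := suppA j'; rewrite !inE.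
rewrite suppE /one_col; case: pickP => [y|/(_ x)]; last by rewrite suppE eqxx.
by rewrite suppE => /eqP ->.
Qed.

Lemma weight1_rows_fix u : u \in weight1_rows -> p u \in weight1_rows.
Proof. by rewrite !inE rowsum_fix. Qed.

Lemma one_col_fix u : u \in weight1_rows -> one_col (p u) = s (one_col u).
Proof.
move=> uU; apply/esym/eqP.
by rewrite -weight1_row_supp ?weight1_rows_fix // A_fix weight1_row_supp.
Qed.

(* Two weight-one rows with their 1 in the same column are equal, making [A] singular. *)
Lemma one_col_inj : {in weight1_rows &, injective one_col}.
Proof.
move=> u v uU vU eq_uv; apply/eqP/negPn/negP => neq_uv.
have : A \in unitmx by move: A_H; rewrite inE => /andP [/andP []].
rewrite unitmxE (determinant_alternate neq_uv) ?unitr0 // => j.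
by rewrite [LHS]F2E [RHS]F2E !weight1_row_supp // eq_uv.
Qed.

Definition one_cols := one_col @: weight1_rows.

Lemma card_weight1_rows : n - k <= #|weight1_rows|.
Proof. by rewrite cardsE card_rowsum_fibre count_eta_target1. Qed.

Lemma colsum_notin_one_cols j : j \notin one_cols -> colsum A j <= k.
Proof.
move=> jV; rewrite /colsum sum_nat_bool_card.
apply: (@leq_trans #|~: weight1_rows|).
  apply/subset_leq_card/subsetP => i Aij; rewrite in_setC; apply: contra jV => iU.
  by move: Aij; rewrite unfold_in (weight1_row_supp iU) => /eqP ->; exact: imset_f.
by rewrite cardsCs setCK card_ord leq_subCl card_weight1_rows.
Qed.

Lemma p_fix i : i \notin weight1_rows -> p i = i.
Proof.
rewrite inE => i1; apply: (perm_fix_unique_fibre rowsum_fix).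
by rewrite card_rowsum_fibre count_eta_target.
Qed.

Lemma s_fix j : j \notin one_cols -> s j = j.
Proof.
move=> jV; apply: (perm_fix_unique_fibre colsum_fix).
by rewrite card_colsum_fibre count_theta_target // neq_ltn ltnS colsum_notin_one_cols.
Qed.

Lemma fixed_perm_conj : exists g : {perm 'I_n}, s = (p ^ g)%g.
Proof.
have cardUV : #|~: weight1_rows| = #|~: one_cols|.
  by rewrite [LHS]cardsCs [RHS]cardsCs !setCK card_in_imset //; exact: one_col_inj.
have [h hUV h_inj] := exists_inj_card_eq cardUV.
pose g x := if x \in weight1_rows then one_col x else h x.
have hV x : x \notin weight1_rows -> h x \notin one_cols.
  by move=> xU; have := hUV x; rewrite !in_setC; apply.
have g_inj : injective g.
  move=> x y; rewrite /g; case: ifPn => xU; case: ifPn => yU.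
  - exact: one_col_inj.
  - by move=> gxy; move: (hV y yU); rewrite -gxy imset_f.
  - by move=> gxy; move: (hV x xU); rewrite gxy imset_f.
  - by apply: h_inj; rewrite inE.
have gp x : g (p x) = s (g x).
  rewrite /g; have [xU|xU] := boolP (x \in weight1_rows).
    by rewrite weight1_rows_fix // one_col_fix.
  by rewrite p_fix // (negPf xU) s_fix // hV.
exists (perm g_inj); apply/permP => x.
by rewrite !permM permE gp -{1}(permKV (perm g_inj) x) permE.
Qed.

End FixedMatrix.

Section FixedPoints.
Variables n k : nat.
Hypothesis le_kn : k <= n.
Local Notation perm := {perm 'I_n}.
Local Open Scope ring_scope.

Definition fixed_set (p s : perm) := [set A in Hnk n k | act_mx p s A == A].

Lemma fixed_set_act (p s a b : perm) A :
  A \in fixed_set p s -> act_mx a b A \in fixed_set (p ^ a) (s ^ b).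
Proof.
rewrite inE => /andP [A_H /eqP fixA]; rewrite inE Hnk_act //= act_mxM /conjg.
by rewrite !mulgA !mulgV !mul1g -act_mxM fixA.
Qed.

Lemma card_fixed_set_conj (p s a b : perm) :
  #|fixed_set (p ^ a) (s ^ b)| = #|fixed_set p s|.
Proof.
have card_le (p' s' a' b' : perm) :
    (#|fixed_set p' s'| <= #|fixed_set (p' ^ a') (s' ^ b')|)%N.
  rewrite -(card_imset _ (@act_mx_inj _ a' b')); apply/subset_leq_card/subsetP.
  by move=> _ /imsetP [A fixA ->]; exact: fixed_set_act.
apply/eqP; rewrite eqn_leq card_le andbT.
by rewrite -{2}(conjgK a p) -{2}(conjgK b s) card_le.
Qed.

Lemma alpha_char_conj (p s : perm) : alpha_char (Hnk n k) p s != 0 ->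
  exists g : perm, s = (p ^ g)%g.
Proof.
rewrite pnatr_eq0 -lt0n => /card_gt0P [A]; rewrite inE => /andP [A_H /eqP fixA].
by apply: (fixed_perm_conj le_kn A_H); apply/act_mx_fixP.
Qed.

Lemma alpha_char_sym (p s : perm) : alpha_char (Hnk n k) p s = alpha_char (Hnk n k) s p.
Proof.
have sym (x y : perm) : alpha_char (Hnk n k) x y != 0 ->
    alpha_char (Hnk n k) x y = alpha_char (Hnk n k) y x.
  case/alpha_char_conj => g ->.
  by rewrite /alpha_char -{1}(conjgK g x) -/(fixed_set _ _) card_fixed_set_conj.
have [ps0|/sym //] := eqVneq (alpha_char (Hnk n k) p s) 0.
by have [sp0|/sym ->] := eqVneq (alpha_char (Hnk n k) s p) 0; rewrite ?ps0 ?sp0.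
Qed.

Lemma alpha_char_sgn (p s : perm) : alpha_char (Hnk n k) p s != 0 -> sgn p = sgn s.
Proof. by case/alpha_char_conj => g ->; rewrite /sgn odd_permJ. Qed.

End FixedPoints.

Theorem mainTheorem10 (n k : nat) (la mu : seq nat) :
  (k <= n)%N -> is_partn n la -> is_partn n mu ->
  mult la mu (Hnk n k) = mult (conj_part la) (conj_part mu) (Hnk n k) /\
  mult la mu (Hnk n k) = mult mu la (Hnk n k).
Proof.
move=> le_kn la_n mu_n; split; rewrite /mult; congr (_ * _)%R.
  apply: eq_bigr => p _; apply: eq_bigr => s _.
  rewrite !specht_char_conj_part // !rmorphM /= !sgn_conj.
  have [->|alpha_ps] := eqVneq (alpha_char (Hnk n k) p s) 0%R; first by rewrite !mul0r.
  by rewrite (alpha_char_sgn le_kn alpha_ps) mulrACA sgn_sqr mul1r.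
rewrite [RHS]exchange_big; apply: eq_bigr => p _; apply: eq_bigr => s _.
by rewrite (alpha_char_sym le_kn) [X in (_ * X)%R = _]mulrC.
Qed.
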